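(* Let $n\ge1$, $d\ge2$. The elements $\delta_0,\dots,\delta_n\in\pi_1(\mathcal U_{n,d},[x_0^d+\cdots+x_n^d])$ pairwise commute and satisfy $\delta_0\delta_1\cdots\delta_n=1$.
   Context: $\mathcal U_{n,d}\subset\mathbf P^{N-1}$ is the complement of the discriminant in the projective space of degree-$d$ forms in $x_0,\dots,x_n$ (forms defining singular hypersurfaces removed). For $\kappa=0,\dots,n$, $\delta_\kappa$ is the class of the loop $t\in[0,2\pi]\mapsto\big[e^{it}x_\kappa^d+\sum_{\lambda\ne\kappa}x_\lambda^d\big]$ in the Fermat family $\{[a_0x_0^d+\cdots+a_nx_n^d]\}$. *)

From mathcomp Require Import all_boot all_algebra.
From mathcomp Require Import all_classical reals trigo Rstruct.
From mathcomp Require Export complex.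
Import GRing.Theory Num.Theory.

Set Implicit Arguments.
Unset Strict Implicit.
Unset Printing Implicit Defensive.

Local Open Scope ring_scope.
Local Open Scope complex_scope.

Definition RR : realType := Rdefinitions.R.
Definition CC := RR[i].

(* Exponent vectors of degree-d monomials in x_0,...,x_n. *)
Definition Mon (n d : nat) :=
  {m : {ffun 'I_n.+1 -> 'I_d.+1} | \sum_(i < n.+1) (m i : nat) == d}%N.

(* A degree-d form in x_0..x_n, given by its coefficient vector (a point of C^N). *)
Definition Form (n d : nat) := Mon n d -> CC.

Definition feval n d (a : Form n d) (x : 'I_n.+1 -> CC) : CC :=
  \sum_(m : Mon n d) a m * \prod_(i < n.+1) x i ^+ (val m i : nat).

Definition fderiv n d (a : Form n d) (j : 'I_n.+1) (x : 'I_n.+1 -> CC) : CC :=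
  \sum_(m : Mon n d) a m * (val m j : nat)%:R *
    \prod_(i < n.+1) (if i == j then x i ^+ (val m i : nat).-1
                      else x i ^+ (val m i : nat)).

Definition singular n d (a : Form n d) : Prop :=
  exists x : 'I_n.+1 -> CC, (exists i, x i != 0) /\
    feval a x = 0 /\ forall j, fderiv a j x = 0.

(* Representatives (nonzero coefficient vectors) of points of U_{n,d}. *)
Definition inU n d (a : Form n d) : Prop :=
  (exists m, a m != 0) /\ ~ singular a.

Definition peq n d (a b : Form n d) : Prop :=
  exists c : CC, c != 0 /\ forall m, b m = c * a m.

(* The topology of P^{N-1}: a point [a] is identified with the Hermitian
   projector a a^* / |a|^2 (a homeomorphism of P^{N-1} onto its image). *)
Definition proj n d (a : Form n d) (m1 m2 : Mon n d) : CC :=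
  a m1 * (a m2)^* / \sum_(m : Mon n d) a m * (a m)^*.

Definition unit_int (t : RR) : Prop := 0 <= t <= 1.

Definition pcont1 n d (g : RR -> Form n d) : Prop :=
  forall t, unit_int t -> forall e : RR, 0 < e -> exists2 del : RR, 0 < del &
    forall t', unit_int t' -> `|t' - t| < del ->
      forall m1 m2, `|proj (g t') m1 m2 - proj (g t) m1 m2| < e%:C.

Definition pcont2 n d (H : RR -> RR -> Form n d) : Prop :=
  forall s t, unit_int s -> unit_int t -> forall e : RR, 0 < e ->
    exists2 del : RR, 0 < del &
    forall s' t', unit_int s' -> unit_int t' -> `|s' - s| < del -> `|t' - t| < del ->
      forall m1 m2, `|proj (H s' t') m1 m2 - proj (H s t) m1 m2| < e%:C.

Definition loopU n d (b : Form n d) (g : RR -> Form n d) : Prop :=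
  (forall t, unit_int t -> inU (g t)) /\ pcont1 g /\ peq b (g 0) /\ peq b (g 1).

(* Homotopy rel endpoints, inside U_{n,d}, between two loops based at [b];
   equality in pi_1(U_{n,d}, [b]). *)
Definition homotopicU n d (b : Form n d) (g1 g2 : RR -> Form n d) : Prop :=
  exists H : RR -> RR -> Form n d,
    (forall s t, unit_int s -> unit_int t -> inU (H s t)) /\ pcont2 H /\
    (forall t, unit_int t -> peq (g1 t) (H 0 t) /\ peq (g2 t) (H 1 t)) /\
    (forall s, unit_int s -> peq b (H s 0) /\ peq b (H s 1)).

Definition concat n d (g1 g2 : RR -> Form n d) : RR -> Form n d :=
  fun t => if t <= 1/2 then g1 (2 * t) else g2 (2 * t - 1).

Definition prod_loops n d (b : Form n d) (gs : seq (RR -> Form n d)) :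
    RR -> Form n d :=
  if gs is g :: gs' then foldl (@concat n d) g gs' else (fun _ => b).

(* The Fermat-family form  sum_k c_k x_k^d. *)
Definition fermat n d (c : 'I_n.+1 -> CC) : Form n d :=
  fun m => \sum_(k < n.+1) (if (val m k : nat) == d then c k else 0).

Definition fermat0 n d : Form n d := fermat (fun _ => 1).

Definition expi (t : RR) : CC := cos t +i* sin t.

(* delta_kappa : t in [0,1] |-> [e^{2 pi i t} x_kappa^d + sum_{l <> kappa} x_l^d]
   (the loop t in [0,2pi] |-> ... of the paper, reparameterized by [0,1]). *)
Definition delta n d (k : 'I_n.+1) : RR -> Form n d :=
  fun t => fermat (fun l => if l == k then expi (2 * pi * t) else 1).

From Pilot Require Import Defs.
From mathcomp Require Import all_boot all_algebra.
From mathcomp Require Import all_classical reals trigo Rstruct.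
From mathcomp Require Import complex.
From mathcomp Require Import topology normedtype.
From mathcomp Require Import ring lra.
Import order.Order.TTheory GRing.Theory Num.Theory numFieldNormedType.Exports.
Local Open Scope ring_scope.
Local Open Scope complex_scope.

(* All the loops involved lie in the torus family
     th |-> [e^(2 pi i th_0) x_0^d + ... + e^(2 pi i th_n) x_n^d],  th in R^(n+1),
   which avoids the discriminant since its members are diagonal with nonzero coefficients.
   The family is 1-periodic in each th_j, and delta_k lifts to a unit segment in the
   direction e_k. So delta_k delta_l and delta_l delta_k lift to two paths from 0 to
   e_k + e_l, and delta_0 ... delta_n to a path from 0 to (1, ..., 1); straight-line
   homotopies in R^(n+1) deform the former into each other and the latter into the
   diagonal t |-> (t, ..., t), whose image [e^(2 pi i t) (x_0^d + ... + x_n^d)] is the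
   base point. All representatives in the family have the same norm, so Lipschitz paths
   of parameters give continuous paths in P^(N-1). *)

Lemma unit_intP {x : RR} : 0 <= x -> x <= 1 -> unit_int x.
Proof. by move=> x_ge0 x_le1; apply/andP. Qed.

Definition pconcat {T : Type} (g h : RR -> T) (t : RR) : T :=
  if t <= 1/2 then g (2 * t) else h (2 * t - 1).

Section ThetaPaths.
Context {n : nat}.

Definition lipschitz01 (K : RR) (f : RR -> 'I_n.+1 -> RR) : Prop :=
  forall j t t', unit_int t -> unit_int t' -> `|f t' j - f t j| <= K * `|t' - t|.

Lemma lipschitz01_le K K' f : K <= K' -> lipschitz01 K f -> lipschitz01 K' f.
Proof.
move=> KK' f_lip j t t' t01 t'01.
exact: le_trans (f_lip j t t' t01 t'01) (ler_wpM2r (normr_ge0 _) KK').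
Qed.

Lemma lipschitz01_pconcat K g h : lipschitz01 K g -> lipschitz01 K h -> g 1 = h 0 ->
  lipschitz01 (2 * K) (pconcat g h).
Proof.
move=> g_lip h_lip gh j t t'.
wlog le_tt' : t t' / t <= t'.
  move=> wlog_le t01 t'01; case: (leP t t') => [|/ltW] tt'; first exact: wlog_le.
  by rewrite distrC [`|t' - t|]distrC; apply: wlog_le.
move=> /andP[t_ge0 t_le1] /andP[t'_ge0 t'_le1].
rewrite /pconcat [`|t' - t|]ger0_norm ?subr_ge0 //.
case: (lerP t' (1/2)) => t'_half.
  rewrite (le_trans le_tt' t'_half).
  apply: le_trans (g_lip j _ _ _ _) _; try by apply: unit_intP; lra.
  by rewrite ger0_norm; nra.
case: (lerP t (1/2)) => t_half; last first.
  apply: le_trans (h_lip j _ _ _ _) _; try by apply: unit_intP; lra.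
  by rewrite ger0_norm; nra.
have u2t : unit_int (2 * t) by apply: unit_intP; lra.
have u2t' : unit_int (2 * t' - 1) by apply: unit_intP; lra.
have -> : h (2 * t' - 1) j - g (2 * t) j =
          (h (2 * t' - 1) j - h 0 j) + (g 1 j - g (2 * t) j) by rewrite gh; ring.
apply: le_trans (ler_normD _ _) _.
have := h_lip j _ _ (unit_intP (lexx 0) ler01) u2t'.
have := g_lip j _ _ u2t (unit_intP ler01 (lexx 1)).
have -> : `|1 - 2 * t| = 1 - 2 * t by rewrite ger0_norm //; lra.
have -> : `|2 * t' - 1 - 0| = 2 * t' - 1 by rewrite ger0_norm //; lra.
nra.
Qed.

Definition segment_homotopy (A B : RR -> 'I_n.+1 -> RR) (s t : RR) (j : 'I_n.+1) : RR :=
  (1 - s) * A t j + s * B t j.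

(* [B t - A t] stays bounded by [2 K] because the two paths start at the same point. *)
Lemma segment_homotopy_lipschitz K A B : 0 <= K ->
  lipschitz01 K A -> lipschitz01 K B -> A 0 = B 0 ->
  forall s t s' t' j, unit_int s -> unit_int t -> unit_int s' -> unit_int t' ->
  `|segment_homotopy A B s' t' j - segment_homotopy A B s t j|
    <= 2 * K * (`|s' - s| + `|t' - t|).
Proof.
move=> K_ge0 A_lip B_lip AB0 s t s' t' j _ t01 /andP[s'_ge0 s'_le1] t'01.
have zero01 : unit_int 0 := unit_intP (lexx 0) ler01.
have BA_bound : `|B t j - A t j| <= 2 * K.
  have -> : B t j - A t j = (B t j - B 0 j) + (A 0 j - A t j) by rewrite AB0; ring.
  apply: le_trans (ler_normD _ _) _; rewrite [`|A 0 j - _|]distrC.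
  have := B_lip j _ _ zero01 t01; have := A_lip j _ _ zero01 t01.
  have : `|t - 0| <= 1 by rewrite subr0 ger0_norm; case/andP: t01.
  nra.
have -> : segment_homotopy A B s' t' j - segment_homotopy A B s t j =
    (1 - s') * (A t' j - A t j) + s' * (B t' j - B t j) + (s' - s) * (B t j - A t j).
  by rewrite /segment_homotopy; ring.
apply: le_trans (ler_normD _ _) _; apply: le_trans (lerD (ler_normD _ _) (lexx _)) _.
rewrite !normrM (ger0_norm s'_ge0) ger0_norm ?subr_ge0 //.
have := A_lip j _ _ t01 t'01; have := B_lip j _ _ t01 t'01.
have := normr_ge0 (s' - s); have := normr_ge0 (t' - t).
have := normr_ge0 (A t' j - A t j); have := normr_ge0 (B t' j - B t j).
nra.
Qed.

Lemma pconcat0 {T : Type} (g h : RR -> T) : pconcat g h 0 = g 0.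
Proof. by rewrite /pconcat ifT ?mulr0 //; lra. Qed.

Lemma pconcat1 {T : Type} (g h : RR -> T) : pconcat g h 1 = h 1.
Proof.
rewrite /pconcat (_ : 2 * 1 - 1 = 1 :> RR); last by ring.
by have -> : (1 <= 1/2 :> RR) = false by apply/negbTE; rewrite -ltNge; lra.
Qed.

Definition ray (th0 : 'I_n.+1 -> RR) (k : nat) (u : RR) (j : 'I_n.+1) : RR :=
  th0 j + ((j : nat) == k)%:R * u.

Lemma ray0 th0 k : ray th0 k 0 = th0.
Proof. by apply/funext => j; rewrite /ray mulr0 addr0. Qed.

Lemma lipschitz01_ray th0 k : lipschitz01 1 (ray th0 k).
Proof.
move=> j t t' _ _; rewrite /ray opprD addrACA subrr add0r -mulrBr normrM mul1r.
by case: (_ == _); rewrite ?normr1 ?mul1r ?normr0 ?mul0r.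
Qed.

Definition comm_path (k l : nat) : RR -> 'I_n.+1 -> RR :=
  pconcat (ray (fun _ => 0) k) (ray (ray (fun _ => 0) k 1) l).

Lemma comm_path0 k l : comm_path k l 0 = fun _ => 0.
Proof. by rewrite /comm_path pconcat0 ray0. Qed.

Lemma comm_path1C k l : comm_path k l 1 = comm_path l k 1.
Proof. by rewrite /comm_path !pconcat1; apply/funext => j; rewrite /ray; ring. Qed.

Lemma lipschitz01_comm_path k l : lipschitz01 2 (comm_path k l).
Proof.
rewrite -[2]mulr1; apply: lipschitz01_pconcat; rewrite ?ray0 //; exact: lipschitz01_ray.
Qed.

Definition ones_below (m : nat) (j : 'I_n.+1) : RR := (j < m)%N%:R.

Lemma ray_ones_below m : ray (ones_below m) m 1 = ones_below m.+1.
Proof.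
apply/funext => j; rewrite /ray /ones_below mulr1 ltnS.
by case: (ltngtP j m); rewrite ?addr0 ?add0r.
Qed.

Fixpoint prod_path (m : nat) : RR -> 'I_n.+1 -> RR :=
  if m is m'.+1 then pconcat (prod_path m') (ray (ones_below m) m)
  else ray (ones_below 0) 0.

Lemma prod_path0 m : prod_path m 0 = ones_below 0.
Proof. by elim: m => [|m IHm] /=; rewrite ?pconcat0 ?ray0. Qed.

Lemma prod_path1 m : prod_path m 1 = ones_below m.+1.
Proof. by case: m => [|m] /=; rewrite ?pconcat1 ray_ones_below. Qed.

Lemma lipschitz01_prod_path m : lipschitz01 (2 ^+ m) (prod_path m).
Proof.
elim: m => [|m IHm] /=; first by rewrite expr0; apply: lipschitz01_ray.
rewrite exprS; apply: lipschitz01_pconcat; rewrite ?prod_path1 ?ray0 //.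
by apply: lipschitz01_le (lipschitz01_ray _ _); apply: exprn_ege1; lra.
Qed.

End ThetaPaths.

Lemma continuous_eps_delta {R : realType} {f : R -> R} (x0 : R) : continuous f ->
  forall e : R, 0 < e -> exists2 r : R, 0 < r &
    forall x, `|x - x0| < r -> `|f x - f x0| < e.
Proof.
move=> f_cont e e_gt0.
have := (cvgrPdist_lt _ _).1 (f_cont x0) _ e_gt0.
move=> /(_ _) /nbhs_ballP [r r_gt0 near_x0].
by exists r => // x x_near; rewrite distrC; apply: near_x0; rewrite /ball /= distrC.
Qed.

Lemma normc_le_norm_re_im (a b : RR) : `|a +i* b| <= (`|a| + `|b|)%:C.
Proof.
have norm_real (c : RR) : `|c%:C| = `|c|%:C.
  by rewrite normc_def /= expr0n addr0 sqrtr_sqr.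
have -> : a +i* b = a%:C + 'i * b%:C.
  by apply/eqP; rewrite eq_complex /= !mul0r !mul1r !subr0 !addr0 !add0r !eqxx.
apply: (le_trans (ler_normD _ _)); rewrite normrM rmorphD /= !norm_real.
by rewrite normc_def /= expr0n add0r expr1n sqrtr1 mul1r.
Qed.

Definition e2pi (x : RR) : CC := expi (2 * pi * x).

Lemma e2piD x y : e2pi (x + y) = e2pi x * e2pi y.
Proof.
rewrite /e2pi /expi mulrDr trigo.cosD trigo.sinD; apply/eqP.
by rewrite eq_complex /= eqxx [X in _ == X]addrC eqxx.
Qed.

Lemma e2pi0 : e2pi 0 = 1.
Proof. by rewrite /e2pi /expi mulr0 cos0 sin0. Qed.

Lemma e2pi1 : e2pi 1 = 1.
Proof. by rewrite /e2pi /expi mulr1 (_ : 2 * pi = pi *+ 2) ?cos2pi ?sin2pi // mulr_natl. Qed.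

Lemma e2pi_nat (m : nat) : e2pi m%:R = 1.
Proof. by elim: m => [|m IHm]; rewrite ?e2pi0 // -addn1 natrD e2piD IHm e2pi1 mulr1. Qed.

Lemma norm_e2pi x : `|e2pi x| = 1.
Proof. by rewrite normc_def /= cos2Dsin2 sqrtr1. Qed.

Lemma e2pi_neq0 x : e2pi x != 0.
Proof. by rewrite -normr_eq0 norm_e2pi oner_eq0. Qed.

Lemma e2pi_mul_conj x : e2pi x * (e2pi x)^* = 1.
Proof. by rewrite -normCK norm_e2pi expr1n. Qed.

Lemma e2pi_cont0 (e : RR) : 0 < e ->
  exists2 r : RR, 0 < r & forall x, `|x| < r -> `|e2pi x - 1| < e%:C.
Proof.
move=> e_gt0; have e2_gt0 : 0 < e / 2 by rewrite divr_gt0.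
have [r1 r1_gt0 cos_near] := continuous_eps_delta 0 (@continuous_cos RR) _ e2_gt0.
have [r2 r2_gt0 sin_near] := continuous_eps_delta 0 (@continuous_sin RR) _ e2_gt0.
have twopi_gt0 : 0 < 2 * pi :> RR by rewrite mulr_gt0 ?pi_gt0.
exists (Num.min r1 r2 / (2 * pi)); first by rewrite divr_gt0 // lt_min r1_gt0 r2_gt0.
move=> x x_small.
have : `|2 * pi * x - 0| < Num.min r1 r2.
  by rewrite subr0 normrM gtr0_norm // mulrC -ltr_pdivlMr.
rewrite lt_min => /andP[x_r1 x_r2].
have -> : e2pi x - 1 = (cos (2 * pi * x) - cos 0) +i* (sin (2 * pi * x) - sin 0).
  by apply/eqP; rewrite eq_complex /= cos0 sin0 subr0 !eqxx.
apply: (le_lt_trans (normc_le_norm_re_im _ _)).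
by rewrite ltcR [e]splitr ltrD ?cos_near ?sin_near.
Qed.

Lemma e2pi_ucont (e : RR) : 0 < e ->
  exists2 r : RR, 0 < r & forall x y, `|x - y| < r -> `|e2pi x - e2pi y| < e%:C.
Proof.
move=> /e2pi_cont0 [r r_gt0 near0]; exists r => // x y xy.
by rewrite -[x](subrK y) e2piD -[X in _ - X]mul1r -mulrBl normrM norm_e2pi mulr1 near0.
Qed.

Section PureMonomials.
Context {n d : nat}.

Lemma mon_eq0_of_pure {m : Mon n d} {k l : 'I_n.+1} :
  (val m k : nat) = d -> l != k -> (val m l : nat) = 0%N.
Proof.
move=> mk lk; have /eqP := valP m.
rewrite (bigD1 k) //= mk -[X in _ = X]addn0 => /addnI /eqP.
by rewrite sum_nat_eq0 => /forallP /(_ l); rewrite lk => /eqP.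
Qed.

Definition pure_mon (k : 'I_n.+1) : Mon n d.
Proof.
exists [ffun i => if i == k then ord_max else ord0].
rewrite (bigD1 k) //= ffunE eqxx big1 ?addn0 // => i /negbTE ik.
by rewrite ffunE ik.
Defined.

Lemma pure_monE k i : (val (pure_mon k) i : nat) = if i == k then d else 0%N.
Proof. by rewrite ffunE; case: (i == k). Qed.

Lemma pure_monP (m : Mon n d) k : (val m k : nat) = d -> m = pure_mon k.
Proof.
move=> mk; apply/val_inj/ffunP => i; apply: val_inj.
rewrite /= ffunE; case: eqP => [->|/eqP ik] //=.
exact: mon_eq0_of_pure mk ik.
Qed.

Hypothesis d_gt0 : (0 < d)%N.

Lemma fermatE (c : 'I_n.+1 -> CC) (m : Mon n d) :
  fermat c m = if [pick k | (val m k : nat) == d] is Some k then c k else 0.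
Proof.
rewrite /fermat; case: pickP => [k /eqP mk | nopure]; last first.
  by rewrite big1 // => i _; rewrite nopure.
rewrite (bigD1 k) //= mk eqxx big1 ?addr0 // => i ik.
by rewrite (mon_eq0_of_pure mk ik) (ltn_eqF d_gt0).
Qed.

Lemma pick_pure_mon k : [pick i | (val (pure_mon k) i : nat) == d] = Some k.
Proof.
case: pickP => [i|/(_ k)]; last by rewrite pure_monE !eqxx.
move=> /eqP; rewrite pure_monE; case: eqP => [->|_ d0] //; by move: d_gt0; rewrite -d0.
Qed.

Lemma fermat_pure_mon (c : 'I_n.+1 -> CC) k : fermat c (pure_mon k) = c k.
Proof. by rewrite fermatE pick_pure_mon. Qed.

Lemma fderiv_fermat (c : 'I_n.+1 -> CC) j x :
  fderiv (@fermat n d c) j x = c j * d%:R * x j ^+ d.-1.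
Proof.
rewrite /fderiv (bigD1 (pure_mon j)) //= [X in _ + X]big1 ?addr0.
  rewrite fermat_pure_mon pure_monE eqxx (bigD1 j) //= eqxx pure_monE eqxx.
  by rewrite big1 ?mulr1 // => i /negbTE ij; rewrite ij pure_monE ij expr0.
move=> m m_not_pure; rewrite fermatE; case: pickP => [k /eqP mk|_].
  have jk : j != k by apply: contraNneq _ m_not_pure => ->; apply/eqP/pure_monP.
  by rewrite (mon_eq0_of_pure mk jk) mulr0 mul0r.
by rewrite !mul0r.
Qed.

(* Away from the origin some x_j is nonzero, and there d c_j x_j^(d-1) <> 0. *)
Lemma inU_fermat (c : 'I_n.+1 -> CC) : (forall k, c k != 0) -> inU (@fermat n d c).
Proof.
move=> c_neq0; split; first by exists (pure_mon ord0); rewrite fermat_pure_mon.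
case=> x [[i xi] [_ /(_ i)]]; rewrite fderiv_fermat => /eqP.
rewrite !mulf_eq0 (negbTE (c_neq0 i)) pnatr_eq0 expf_eq0 (negbTE xi) andbF orbF.
by rewrite (gtn_eqF d_gt0).
Qed.

End PureMonomials.

Lemma peq_refl n d (a : Form n d) : peq a a.
Proof. by exists 1; split=> [|m]; rewrite ?oner_neq0 ?mul1r. Qed.

Section TorusFamily.
Context {n d : nat}.

Definition torus (th : 'I_n.+1 -> RR) : Form n d := fermat (fun j => e2pi (th j)).

Definition npure : nat := #|[pred m : Mon n d | [pick k | (val m k : nat) == d] != None]|.

Definition is_period (th : 'I_n.+1 -> RR) : Prop := forall j, e2pi (th j) = 1.

Lemma is_period0 : is_period (fun _ => 0).
Proof. by move=> j; apply: e2pi0. Qed.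

Lemma is_period_ray th0 k (m : nat) : is_period th0 -> is_period (ray th0 k m%:R).
Proof. by move=> th0_per j; rewrite /ray e2piD th0_per mul1r -natrM e2pi_nat. Qed.

Lemma is_period_ones_below m : is_period (ones_below m).
Proof. by move=> j; apply: e2pi_nat. Qed.

Lemma torus_pconcat (g h : RR -> 'I_n.+1 -> RR) :
  concat (torus \o g) (torus \o h) = torus \o pconcat g h.
Proof. by apply/funext => t; rewrite /concat /pconcat /=; case: ifP. Qed.

Lemma delta_torus th0 (k : 'I_n.+1) : is_period th0 -> delta k = torus \o ray th0 k.
Proof.
move=> th0_per; apply/funext => t; apply/funext => m.
rewrite /delta /torus /fermat; apply: eq_bigr => l _; rewrite /ray e2piD th0_per mul1r.
by have -> : ((l : nat) == k) = (l == k) by []; case: (l == k); rewrite ?mul1r ?mul0r ?e2pi0.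
Qed.

Hypothesis d_gt0 : (0 < d)%N.

Lemma inU_torus th : inU (torus th).
Proof. by apply: inU_fermat => // j; apply: e2pi_neq0. Qed.

Lemma torus_eq_fermat0 th : is_period th -> torus th = @fermat0 n d.
Proof. by move=> th_int; apply/funext => m; apply: eq_bigr => k _; rewrite th_int. Qed.

Lemma peq_fermat0_torus_period th : is_period th -> peq (@fermat0 n d) (torus th).
Proof. by move=> th_per; rewrite torus_eq_fermat0 //; apply: peq_refl. Qed.

Lemma peq_fermat0_torus_const x : peq (@fermat0 n d) (torus (fun _ => x)).
Proof.
exists (e2pi x); split=> [|m]; first exact: e2pi_neq0.
by rewrite /torus /fermat0 !fermatE //; case: pickP; rewrite ?mulr1 ?mulr0.
Qed.

Lemma normsq_torus th : \sum_(m : Mon n d) torus th m * (torus th m)^* = npure%:R.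
Proof.
rewrite /npure -sum1_card natr_sum [RHS]big_mkcond; apply: eq_bigr => m _ /=.
by rewrite inE /torus fermatE //; case: pickP => [k _|_]; rewrite ?e2pi_mul_conj ?mul0r.
Qed.

Lemma npure_gt0 : (0 < npure)%N.
Proof. by apply/card_gt0P; exists (@pure_mon n d ord0); rewrite unfold_in /= pick_pure_mon. Qed.

Lemma proj_torus_close th th' (e : RR) : 0 < e ->
  (forall j, `|e2pi (th' j) - e2pi (th j)| < (e / 2)%:C) ->
  forall m1 m2, `|Defs.proj (torus th') m1 m2 - Defs.proj (torus th) m1 m2| < e%:C.
Proof.
move=> e_gt0 close m1 m2.
have npure_ge1 : 1 <= npure%:R :> CC by rewrite ler1n npure_gt0.
rewrite /Defs.proj !normsq_torus -mulrBl normrM normfV normr_nat.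
rewrite ltr_pdivrMr ?(lt_le_trans ltr01) //.
apply: lt_le_trans (ler_wpM2l (ltW _) npure_ge1); last by rewrite ltcR.
rewrite mulr1 /torus !fermatE //.
case: pickP => [k1 _|_]; last by rewrite !mul0r subrr normr0 ltcR.
case: pickP => [k2 _|_]; last by rewrite conjC0 !mulr0 subrr normr0 ltcR.
set u := e2pi (th k1); set u' := e2pi (th' k1).
set v := e2pi (th k2); set v' := e2pi (th' k2).
have -> : u' * v'^* - u * v^* = (u' - u) * v'^* + u * (v' - v)^*.
  by rewrite rmorphB /= mulrBl mulrBr addrA subrK.
apply: le_lt_trans (ler_normD _ _) _.
rewrite !normrM !norm_conjC !norm_e2pi mulr1 mul1r.
by rewrite [e]splitr rmorphD ltrD ?close.
Qed.

Lemma pcont2_torus (Th : RR -> RR -> 'I_n.+1 -> RR) (L : RR) : 0 < L ->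
  (forall s t s' t' j, unit_int s -> unit_int t -> unit_int s' -> unit_int t' ->
     `|Th s' t' j - Th s t j| <= L * (`|s' - s| + `|t' - t|)) ->
  pcont2 (fun s t => torus (Th s t)).
Proof.
move=> L_gt0 Th_lip s t s01 t01 e e_gt0.
have [r r_gt0 e2pi_close] := e2pi_ucont (e / 2) (divr_gt0 e_gt0 (ltr0Sn _ 1)).
exists (r / (2 * L)) => [|s' t' s'01 t'01 ss' tt']; first by rewrite divr_gt0 ?mulr_gt0.
apply: proj_torus_close => // j; apply: e2pi_close.
apply: le_lt_trans (Th_lip _ _ _ _ _ s01 t01 s'01 t'01) _.
rewrite -ltr_pdivlMl // [_^-1 * r](_ : _ = r / (2 * L) + r / (2 * L)) ?ltrD //.
by field; rewrite gt_eqF.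
Qed.

End TorusFamily.

Lemma pcont1_of_pcont2 n d (g : RR -> Form n d) : pcont2 (fun _ t => g t) -> pcont1 g.
Proof.
move=> g_cont t t01 e e_gt0.
have zero01 : unit_int 0 by rewrite /unit_int lexx ler01.
have [del del_gt0 close] := g_cont 0 t zero01 t01 e e_gt0.
by exists del => // t' t'01 tt'; apply: (close 0 t') => //; rewrite subr0 normr0.
Qed.

Section DeltaLoops.
Variables n d : nat.
Hypothesis d_gt0 : (0 < d)%N.

Lemma homotopicU_torus {b : Form n d} {g1 g2 : RR -> Form n d}
    {A B : RR -> 'I_n.+1 -> RR} {K : RR} :
  0 < K -> lipschitz01 K A -> lipschitz01 K B -> A 0 = B 0 -> A 1 = B 1 ->
  peq b (torus (A 0)) -> peq b (torus (A 1)) ->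
  (forall t, unit_int t -> peq (g1 t) (torus (A t)) /\ peq (g2 t) (torus (B t))) ->
  homotopicU b g1 g2.
Proof.
move=> K_gt0 A_lip B_lip AB0 AB1 b_A0 b_A1 g12.
exists (fun s t => torus (segment_homotopy A B s t)).
split=> [s t _ _|]; first exact: inU_torus.
split.
  apply: (pcont2_torus d_gt0 _ (2 * K)); first by rewrite mulr_gt0.
  exact: segment_homotopy_lipschitz (ltW K_gt0) A_lip B_lip AB0.
have seg_end s t : A t = B t -> segment_homotopy A B s t = A t.
  by move=> ABt; apply/funext => j; rewrite /segment_homotopy -ABt; ring.
split=> [t t01|s _]; last by rewrite !seg_end.
have -> : segment_homotopy A B 0 t = A t.
  by apply/funext => j; rewrite /segment_homotopy; ring.
have -> : segment_homotopy A B 1 t = B t.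
  by apply/funext => j; rewrite /segment_homotopy; ring.
exact: g12.
Qed.

Lemma loopU_delta (k : 'I_n.+1) : loopU (@fermat0 n d) (delta k).
Proof.
have per1 := is_period_ray _ k 1 is_period0.
rewrite (delta_torus _ k is_period0); split=> [t _|]; first exact: inU_torus.
split.
  apply/pcont1_of_pcont2/(pcont2_torus d_gt0 _ 1) => // s t s' t' j _ t01 _ t'01.
  apply: le_trans (lipschitz01_ray _ _ j t t' t01 t'01) _.
  by rewrite ler_wpM2l // lerDr.
by split; rewrite /= ?ray0; apply: peq_fermat0_torus_period; [apply: is_period0 | apply: per1].
Qed.

Lemma homotopicU_delta_comm (k l : 'I_n.+1) :
  homotopicU (@fermat0 n d) (concat (delta k) (delta l)) (concat (delta l) (delta k)).
Proof.
have concat_delta (i j : 'I_n.+1) : concat (delta i) (delta j) = @torus n d \o comm_path i j.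
  rewrite (delta_torus _ i is_period0) (delta_torus _ j (is_period_ray _ i 1 is_period0)).
  exact: torus_pconcat.
rewrite !concat_delta.
apply: (homotopicU_torus (K := 2) _ (lipschitz01_comm_path _ _) (lipschitz01_comm_path _ _)
  _ (comm_path1C _ _)).
- by lra.
- by rewrite !comm_path0.
- by rewrite comm_path0; apply/peq_fermat0_torus_period/is_period0.
- rewrite /comm_path pconcat1.
  exact: peq_fermat0_torus_period (is_period_ray _ l 1 (is_period_ray _ k 1 is_period0)).
- by move=> t _; split; apply: peq_refl.
Qed.

Lemma prod_loops_delta :
  prod_loops (@fermat0 n d) [seq delta k | k <- enum 'I_n.+1] = @torus n d \o @prod_path n n.
Proof.
have foldl_delta m : (m <= n)%N ->
    foldl (@concat n d) (delta (inord 0)) [seq delta (inord i) | i <- iota 1 m] =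
    @torus n d \o @prod_path n m.
  elim: m => [|m IHm] lt_mn.
    by rewrite /= (delta_torus _ _ (is_period_ones_below 0)) inordK.
  have -> : iota 1 m.+1 = rcons (iota 1 m) m.+1 by rewrite -cats1 -[m.+1]addn1 iotaD addn1.
  rewrite map_rcons foldl_rcons IHm 1?ltnW //.
  by rewrite (delta_torus _ _ (is_period_ones_below m.+1)) torus_pconcat inordK.
have -> : [seq @delta n d k | k <- enum 'I_n.+1] = [seq delta (inord i) | i <- iota 0 n.+1].
  by rewrite -val_enum_ord -map_comp; apply: eq_map => i /=; rewrite inord_val.
exact: foldl_delta.
Qed.

Lemma homotopicU_prod_delta :
  homotopicU (@fermat0 n d) (prod_loops (@fermat0 n d) [seq delta k | k <- enum 'I_n.+1])
    (fun _ => @fermat0 n d).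
Proof.
rewrite prod_loops_delta.
have diag_lip : lipschitz01 (2 ^+ n) (fun t (_ : 'I_n.+1) => t).
  apply: (lipschitz01_le 1); first by apply: exprn_ege1; lra.
  by move=> j t t' _ _; rewrite mul1r.
have ones_all : ones_below n.+1 = fun _ : 'I_n.+1 => 1.
  by apply/funext => j; rewrite /ones_below ltn_ord.
apply: (homotopicU_torus (K := 2 ^+ n)) (@lipschitz01_prod_path n n) diag_lip _ _ _ _ _.
- by apply: exprn_gt0; lra.
- by rewrite prod_path0.
- by rewrite prod_path1 ones_all.
- by rewrite prod_path0; apply/peq_fermat0_torus_period/is_period_ones_below.
- by rewrite prod_path1; apply/peq_fermat0_torus_period/is_period_ones_below.
- by move=> t _; split; [apply: peq_refl | apply: peq_fermat0_torus_const].
Qed.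

End DeltaLoops.

(* The argument works for n = 0 as well. *)
Theorem mainTheorem17 (n d : nat) (hn : (1 <= n)%N) (hd : (2 <= d)%N) :
  (forall k : 'I_n.+1, loopU (@fermat0 n d) (@delta n d k)) /\
  (forall k l : 'I_n.+1,
     homotopicU (@fermat0 n d) (concat (@delta n d k) (@delta n d l))
                               (concat (@delta n d l) (@delta n d k))) /\
  homotopicU (@fermat0 n d)
    (prod_loops (@fermat0 n d) [seq @delta n d k | k <- enum 'I_n.+1])
    (fun _ => @fermat0 n d).
Proof.
have d_gt0 : (0 < d)%N by apply: leq_trans hd.
split; first by move=> k; apply: loopU_delta.
split; first by move=> k l; apply: homotopicU_delta_comm.
exact: homotopicU_prod_delta.
Qed.
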